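(* Let $F:\mathbb{R}\to\mathbb{R}$ be smooth and $v:[0,1]\to\mathbb{R}$ smooth. For each $x\in[0,1]$ let $y(t,x)$ be the solution of $$\frac{d^2y(t,x)}{dt^2}=F(y(t,x)),\quad y(0,x)=x,\quad \frac{dy(0,x)}{dt}=v(x),$$ assumed to exist and be unique for all $t\in[0,\infty)$. Put $U(y)=-\int_0^yF(z)\,dz$ and $H_0(x)=\frac{v(x)^2}{2}+U(x)$. For $x\in[0,1]$ and $y\ge x$ let $T(x,y)$ be the first time moment at which $y(t,x)=y$. Assume: (i) $v(x)>0$ for all $x\in[0,1]$; (ii) $H_0(x)-U(y)>0$ for all $x\in[0,1]$ and all $y\ge x$. Then the following conditions are equivalent: 1) there are no collisions on $[0,\infty)$, i.e. $y(t,x)\neq y(t,x')$ for all $t\ge 0$ and all $x\neq x'$ in $[0,1]$; 2) for every $y>0$, the function $x\mapsto T(x,y)$ is strictly decreasing on $[0,\min\{y,1\}]$; 3) for every $y>0$ and every $x\in[0,\min\{y,1\}]$, $$\frac{1}{v(x)}+\frac{v(x)v'(x)-F(x)}{2\sqrt2}\int_x^y\frac{dz}{(H_0(x)-U(z))^{3/2}}\ge 0,$$ where equality can hold only on a discrete set of points.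
   Context: This concerns a one-dimensional continuum of non-interacting point particles: each point $x\in[0,1]$ is a particle with initial position $x$ and initial velocity $v(x)$, moving independently under the external force $F$ (unit mass). *)

From Stdlib Require Import Reals.
From Coquelicot Require Import Coquelicot.
Open Scope R_scope.

Definition smooth (f : R -> R) : Prop := forall (n : nat) (x : R), ex_derive_n f n x.

(* Derivative of f at t relative to the domain [0, +oo) (one-sided at t = 0). *)
Definition is_derive_nonneg (f : R -> R) (t l : R) : Prop :=
  filterlim (fun s => (f s - f t) / (s - t))
    (within (fun s => 0 <= s /\ s <> t) (locally t)) (locally l).

Definition is_solution (F : R -> R) (x0 v0 : R) (f : R -> R) : Prop :=
  exists df : R -> R,
    f 0 = x0 /\ df 0 = v0 /\
    forall t, 0 <= t -> is_derive_nonneg f t (df t) /\ is_derive_nonneg df t (F (f t)).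

Definition Upot (F : R -> R) (y : R) : R := - RInt F 0 y.

Definition H0 (F v : R -> R) (x : R) : R := v x ^ 2 / 2 + Upot F x.

Definition first_time (f : R -> R) (Y : R) : R :=
  real (Glb_Rbar (fun t => 0 <= t /\ f t = Y)).

Definition discrete_set (S : R -> Prop) : Prop :=
  forall x, S x -> exists eps : R, 0 < eps /\
    forall x', S x' -> Rabs (x' - x) < eps -> x' = x.

Definition crit_expr (F v : R -> R) (x y : R) : R :=
  / v x + (v x * Derive v x - F x) / (2 * sqrt 2) *
    RInt (fun z => / Rpower (H0 F v x - Upot F z) (3 / 2)) x y.

From Stdlib Require Import Reals Lra.
From Coquelicot Require Import Coquelicot.
Open Scope R_scope.

(* Energy conservation gives [y'(t,x)^2 = 2 (H0(x) - U(y(t,x)))], so by (ii) the velocity of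
   each particle never vanishes: it moves strictly to the right and reaches every [Y >= x] at
   the time [T(x,Y) = RInt (fun z => 1 / sqrt (2 (H0(x) - U(z)))) x Y].  Particles start in
   order, so two of them collide iff one overtakes the other, i.e. (intermediate value
   theorem) iff they reach some position in the wrong order: this is 1) <-> 2).  Leibniz's
   rule gives [d/dx T(x,Y) = - crit_expr F v x Y], whence 2) <-> 3) by the mean value
   theorem.  Finally the integral in [crit_expr] increases with [Y], so nonnegativity for
   all [Y] already forces [crit_expr > 0]: the exceptional set in 3) is empty. *)

Lemma continuous_of_continuity_pt f x : continuity_pt f x -> continuous f x.
Proof. apply continuity_pt_filterlim. Qed.

Lemma is_derive_continuity_pt g t l : is_derive g t l -> continuity_pt g t.
Proof.
  intros H. apply continuity_pt_filterlim, (ex_derive_continuous (V := R_NormedModule)).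
  exists l; exact H.
Qed.

Lemma smooth_ex_derive f : smooth f -> forall x, ex_derive f x.
Proof. intros Hf x. exact (Hf 1%nat x). Qed.

Lemma smooth_continuity_pt f : smooth f -> forall x, continuity_pt f x.
Proof.
  intros Hf x. destruct (smooth_ex_derive f Hf x) as [l Hl].
  exact (is_derive_continuity_pt f x l Hl).
Qed.

Lemma smooth_continuity_pt_Derive f : smooth f -> forall x, continuity_pt (Derive f) x.
Proof. intros Hf x. destruct (Hf 2%nat x) as [l Hl]. exact (is_derive_continuity_pt _ x l Hl). Qed.

Lemma is_derive_Rpower w c : 0 < w -> is_derive (fun w => Rpower w c) w (c * Rpower w (c - 1)).
Proof. intros Hw. apply is_derive_Reals, derivable_pt_lim_power, Hw. Qed.

Lemma continuity_pt_Rpower w c : 0 < w -> continuity_pt (fun w => Rpower w c) w.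
Proof. intros Hw. eapply is_derive_continuity_pt, is_derive_Rpower, Hw. Qed.

Lemma Rpower_pos w c : 0 < Rpower w c.
Proof. apply exp_pos. Qed.

Lemma is_derive_zero_eq g a b : a <= b -> (forall s, a <= s <= b -> is_derive g s 0) -> g b = g a.
Proof.
  intros Hab Hg. destruct (MVT_gen g a b (fun _ => 0)) as [c [_ Hc]].
  - intros s Hs. rewrite Rmin_left, Rmax_right in Hs by lra. apply Hg; lra.
  - intros s Hs. rewrite Rmin_left, Rmax_right in Hs by lra.
    eapply is_derive_continuity_pt, Hg, Hs.
  - lra.
Qed.

Lemma is_derive_pos_lt g dg a b : a < b ->
  (forall s, a <= s <= b -> is_derive g s (dg s)) -> (forall s, a <= s <= b -> 0 < dg s) ->
  g a < g b.
Proof.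
  intros Hab Hg Hpos. destruct (MVT_gen g a b dg) as [c [Hc Hmvt]].
  - intros s Hs. rewrite Rmin_left, Rmax_right in Hs by lra. apply Hg; lra.
  - intros s Hs. rewrite Rmin_left, Rmax_right in Hs by lra.
    eapply is_derive_continuity_pt, Hg, Hs.
  - rewrite Rmin_left, Rmax_right in Hc by lra.
    pose proof (Hpos c Hc). nra.
Qed.

Lemma is_derive_pos_locally g x l : is_derive g x l -> 0 < l ->
  exists d, 0 < d /\ forall h, 0 < h < d -> g (x - h) < g x < g (x + h).
Proof.
  intros H Hl. apply is_derive_Reals in H. destruct (H l Hl) as [d Hd].
  exists d. split; [apply cond_pos |]. intros h Hh.
  pose proof (Hd h ltac:(lra) ltac:(rewrite Rabs_right; lra)) as Hr.
  pose proof (Hd (- h) ltac:(lra) ltac:(rewrite Rabs_left; lra)) as Hlft.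
  apply Rabs_def2 in Hr, Hlft.
  set (qr := (g (x + h) - g x) / h) in Hr.
  set (ql := (g (x + - h) - g x) / - h) in Hlft.
  assert (g (x + h) - g x = qr * h) by (unfold qr; field; lra).
  assert (g (x + - h) - g x = ql * - h) by (unfold ql; field; lra).
  replace (x - h) with (x + - h) by ring. split; nra.
Qed.

Lemma is_derive_interior_max g c l a b : is_derive g c l -> a < c < b ->
  (forall s, a < s < b -> g s <= g c) -> l = 0.
Proof.
  intros H Hc Hmax. apply is_derive_Reals in H.
  assert (pr : derivable_pt g c) by (exists l; exact H).
  rewrite <- (derive_pt_eq_0 g c l pr H).
  apply (deriv_maximum g a b c pr); try tauto. intros s Hs1 Hs2; apply Hmax; lra.
Qed.

Lemma continuity_pt_pos_lower_bound h a b : a <= b ->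
  (forall z, a <= z <= b -> continuity_pt h z) -> (forall z, a <= z <= b -> 0 < h z) ->
  exists m, 0 < m /\ forall z, a <= z <= b -> m <= h z.
Proof.
  intros Hab Hc Hpos. destruct (continuity_ab_min h a b Hab Hc) as [zm [Hmin Hzm]].
  exists (h zm). split; [apply Hpos, Hzm | exact Hmin].
Qed.

(* Continuation to [s < 0] by the line of slope [a] through [f 0], so that two-sided
   calculus (chain rule, mean value and intermediate value theorems) applies to functions
   known only on [0, +oo). *)
Definition extend_left (f : R -> R) (a : R) s := if Rlt_dec s 0 then f 0 + a * s else f s.

Lemma extend_left_nonneg f a s : 0 <= s -> extend_left f a s = f s.
Proof. intros Hs; unfold extend_left; destruct (Rlt_dec s 0); lra. Qed.

Lemma is_derive_nonneg_eps f t l : is_derive_nonneg f t l -> forall eps, 0 < eps ->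
  exists d, 0 < d /\ forall s, 0 <= s -> s <> t -> Rabs (s - t) < d ->
    Rabs ((f s - f t) / (s - t) - l) < eps.
Proof.
  intros H eps He.
  destruct (H (ball l (mkposreal eps He)) (locally_ball _ _)) as [d Hd].
  exists d. split; [apply cond_pos |]. intros s Hs Hst Hd'. apply (Hd s); auto.
Qed.

Lemma is_derive_extend_left f a t l : 0 <= t -> is_derive_nonneg f t l -> (t = 0 -> l = a) ->
  is_derive (extend_left f a) t l.
Proof.
  intros Ht H Hl. apply is_derive_Reals. intros eps He.
  destruct (is_derive_nonneg_eps f t l H eps He) as [d [Hd Hs]].
  destruct (Rle_lt_or_eq_dec 0 t Ht) as [Htp | <-].
  - assert (Hm : 0 < Rmin d t) by (apply Rmin_pos; lra).
    exists (mkposreal _ Hm). intros h Hh0 Hh. simpl in Hh.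
    pose proof (Rmin_l d t). pose proof (Rmin_r d t).
    assert (0 <= t + h) by (apply Rabs_def2 in Hh; lra).
    rewrite !extend_left_nonneg by lra.
    specialize (Hs (t + h)). replace (t + h - t) with h in Hs by ring.
    apply Hs; [lra | intro; apply Hh0; lra | lra].
  - exists (mkposreal d Hd). intros h Hh0 Hh; simpl in Hh.
    rewrite (extend_left_nonneg f a 0), Rplus_0_l by lra.
    destruct (Rlt_dec h 0) as [hn | hp].
    + unfold extend_left at 1. destruct (Rlt_dec h 0); [| lra].
      rewrite Hl by reflexivity.
      replace ((f 0 + a * h - f 0) / h - a) with 0 by (field; exact Hh0).
      rewrite Rabs_R0; lra.
    + rewrite extend_left_nonneg by lra.
      specialize (Hs h). rewrite Rminus_0_r in Hs. apply Hs; lra.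
Qed.

Lemma is_derive_extend_left_neg f a t : t < 0 -> is_derive (extend_left f a) t a.
Proof.
  intros Ht. apply (is_derive_ext_loc (fun s => f 0 + a * s)).
  - assert (Hp : 0 < - t) by lra. exists (mkposreal _ Hp). intros s Hs.
    apply Rabs_def2 in Hs. unfold extend_left. destruct (Rlt_dec s 0); [reflexivity |].
    simpl in Hs. unfold minus, plus, opp in Hs; simpl in Hs. lra.
  - auto_derive; [exact I | ring].
Qed.

Lemma continuity_extend_left f df : (forall t, 0 <= t -> is_derive_nonneg f t (df t)) ->
  continuity (extend_left f (df 0)).
Proof.
  intros Hd t. destruct (Rlt_le_dec t 0) as [Htn | Htp].
  - eapply is_derive_continuity_pt, is_derive_extend_left_neg, Htn.
  - eapply is_derive_continuity_pt, is_derive_extend_left; [exact Htp | apply Hd, Htp |].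
    intros ->; reflexivity.
Qed.

Lemma continuity_extension_nonneg f df : (forall t, 0 <= t -> is_derive_nonneg f t (df t)) ->
  exists g, continuity g /\ forall t, 0 <= t -> g t = f t.
Proof.
  intros Hd. exists (extend_left f (df 0)).
  split; [exact (continuity_extend_left f df Hd) | apply extend_left_nonneg].
Qed.

Lemma first_time_increasing f tau : (forall t1 t2, 0 <= t1 < t2 -> f t1 < f t2) -> 0 <= tau ->
  first_time f (f tau) = tau.
Proof.
  intros Hm Ht. unfold first_time.
  rewrite (is_glb_Rbar_unique _ (Finite tau)); [reflexivity | split].
  - intros t [Ht0 Heq]. simpl. destruct (Rlt_le_dec t tau) as [Hlt | Hle]; [| exact Hle].
    specialize (Hm t tau ltac:(lra)). lra.
  - intros b Hb. apply Hb. split; [exact Ht | reflexivity].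
Qed.

(** * Energy *)

(* [kinetic F v u z] is half the squared velocity, at position [z], of the particle started
   at [u]; [inv_speed] is the integrand of the hitting time, written with [Rpower] so that its
   derivative in [u] is literally the integrand of [crit_expr]. *)
Definition kinetic (F v : R -> R) (u z : R) : R := H0 F v u - Upot F z.

Definition inv_speed (F v : R -> R) (u z : R) : R := / sqrt 2 * Rpower (kinetic F v u z) (- / 2).

Definition dH0 (F v : R -> R) (u : R) : R := v u * Derive v u - F u.

Section Potential.
Variables F v : R -> R.
Hypothesis HF : forall z, continuity_pt F z.

Lemma is_derive_Upot z : is_derive (Upot F) z (- F z).
Proof.
  apply (is_derive_opp (fun b => RInt F 0 b)).
  apply (is_derive_RInt (V := R_NormedModule) F (fun b => RInt F 0 b) 0 z).
  - apply filter_forall; intros b.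
    apply (RInt_correct (V := R_CompleteNormedModule)).
    apply (ex_RInt_continuous (V := R_CompleteNormedModule)).
    intros; apply continuous_of_continuity_pt, HF.
  - apply continuous_of_continuity_pt, HF.
Qed.

Lemma continuity_pt_Upot z : continuity_pt (Upot F) z.
Proof. eapply is_derive_continuity_pt, is_derive_Upot. Qed.

Lemma is_derive_kinetic_r u z : is_derive (kinetic F v u) z (F z).
Proof.
  evar (l : R); replace (F z) with l.
  - apply (is_derive_minus (fun _ => H0 F v u) (Upot F));
      [apply is_derive_const | apply is_derive_Upot].
  - unfold l, minus, plus, opp, zero; simpl. ring.
Qed.

Lemma continuity_pt_Rpower_kinetic c u z : 0 < kinetic F v u z ->
  continuity_pt (fun z => Rpower (kinetic F v u z) c) z.
Proof.
  intros Hk. apply (continuity_pt_comp (kinetic F v u) (fun w => Rpower w c)).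
  - eapply is_derive_continuity_pt, is_derive_kinetic_r.
  - apply continuity_pt_Rpower, Hk.
Qed.

Lemma continuous_inv_Rpower_kinetic c u z : 0 < kinetic F v u z ->
  continuous (fun z => / Rpower (kinetic F v u z) c) z.
Proof.
  intros Hk. apply continuous_of_continuity_pt, continuity_pt_inv;
    [apply continuity_pt_Rpower_kinetic, Hk | apply Rgt_not_eq, Rpower_pos].
Qed.

Lemma continuous_inv_speed u z : 0 < kinetic F v u z -> continuous (inv_speed F v u) z.
Proof.
  intros Hk. apply continuous_of_continuity_pt.
  apply (continuity_pt_mult (fun _ => / sqrt 2));
    [apply continuity_pt_const; intros ? ?; reflexivity |].
  apply continuity_pt_Rpower_kinetic, Hk.
Qed.

Lemma inv_speed_pos u z : 0 < inv_speed F v u z.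
Proof.
  apply Rmult_lt_0_compat; [| apply Rpower_pos].
  apply Rinv_0_lt_compat, sqrt_lt_R0; lra.
Qed.

Lemma inv_speed_sqrt u z : 0 < kinetic F v u z ->
  inv_speed F v u z * sqrt (2 * kinetic F v u z) = 1.
Proof.
  intros Hk. unfold inv_speed.
  rewrite Rpower_Ropp, Rpower_sqrt, sqrt_mult by lra.
  assert (0 < sqrt 2) by (apply sqrt_lt_R0; lra).
  assert (0 < sqrt (kinetic F v u z)) by (apply sqrt_lt_R0; lra).
  field; split; lra.
Qed.

Lemma kinetic_pos_left x : (forall z, x <= z -> 0 < kinetic F v x z) ->
  exists d, 0 < d /\ forall z, x - d <= z -> 0 < kinetic F v x z.
Proof.
  intros Hkin.
  pose proof (Hkin x (Rle_refl x)) as Hx.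
  destruct (proj1 (continuity_pt_locally _ _) (continuity_pt_Upot x)
              (mkposreal _ Hx)) as [d Hnear]; simpl in Hnear.
  exists (d / 2). split; [pose proof (cond_pos d); lra |]. intros z Hz.
  destruct (Rle_lt_dec x z) as [| Hzx]; [apply Hkin; assumption |].
  assert (Hball : Rabs (z - x) < d) by (rewrite Rabs_left; lra).
  specialize (Hnear z Hball). apply Rabs_def2 in Hnear. unfold kinetic in *. lra.
Qed.

Hypothesis Hv : forall u, ex_derive v u.

Lemma is_derive_H0 u : is_derive (H0 F v) u (dH0 F v u).
Proof.
  unfold H0, dH0. evar (l : R); replace (v u * Derive v u - F u) with l.
  - apply (is_derive_plus (fun u => v u ^ 2 / 2) (Upot F)); [| apply is_derive_Upot].
    apply (is_derive_ext (fun u => / 2 * v u ^ 2)); [intros; lra |].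
    apply is_derive_scal, is_derive_pow, Derive_correct, Hv.
  - unfold l; simpl; unfold plus; simpl. field.
Qed.

Lemma continuity_pt_H0 u : continuity_pt (H0 F v) u.
Proof. eapply is_derive_continuity_pt, is_derive_H0. Qed.

Lemma continuity_2d_pt_kinetic u z : continuity_2d_pt (kinetic F v) u z.
Proof.
  apply (continuity_2d_pt_minus (fun a _ => H0 F v a) (fun _ b => Upot F b)).
  - apply (continuity_1d_2d_pt_comp (H0 F v) (fun a _ => a)).
    + apply continuity_pt_H0.
    + apply continuity_2d_pt_id1.
  - apply (continuity_1d_2d_pt_comp (Upot F) (fun _ b => b)).
    + apply continuity_pt_Upot.
    + apply continuity_2d_pt_id2.
Qed.

Lemma is_derive_inv_speed_l u z : 0 < kinetic F v u z ->
  is_derive (fun u => inv_speed F v u z) u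
    (- dH0 F v u / (2 * sqrt 2) * / Rpower (kinetic F v u z) (3 / 2)).
Proof.
  intros Hk. unfold inv_speed.
  evar (l : R); replace (- dH0 F v u / (2 * sqrt 2) * / Rpower (kinetic F v u z) (3 / 2)) with l.
  - apply is_derive_scal.
    apply (is_derive_comp (fun w => Rpower w (- / 2)) (fun u => kinetic F v u z)).
    + apply is_derive_Rpower, Hk.
    + apply (is_derive_minus (H0 F v) (fun _ => Upot F z));
        [apply is_derive_H0 | apply is_derive_const].
  - unfold l, minus, plus, opp, zero, scal; simpl; unfold mult; simpl.
    replace (- / 2 - 1) with (- (3 / 2)) by field. rewrite Rpower_Ropp.
    assert (0 < sqrt 2) by (apply sqrt_lt_R0; lra).
    pose proof (Rpower_pos (kinetic F v u z) (3 / 2)).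
    field; split; lra.
Qed.

End Potential.

(** * A single particle *)

Section Particle.
Variables (F v : R -> R) (x : R) (f df : R -> R).
Hypothesis HF : forall z, continuity_pt F z.
Hypothesis Hvx : 0 < v x.
Hypothesis Hkin : forall z, x <= z -> 0 < kinetic F v x z.
Hypothesis Hf0 : f 0 = x.
Hypothesis Hdf0 : df 0 = v x.
Hypothesis Hd : forall t, 0 <= t ->
  is_derive_nonneg f t (df t) /\ is_derive_nonneg df t (F (f t)).

Let fe := extend_left f (df 0).
Let dfe := extend_left df (F (f 0)).

Let fe_nonneg t : 0 <= t -> fe t = f t.
Proof. apply extend_left_nonneg. Qed.

Let is_derive_fe t : 0 <= t -> is_derive fe t (df t).
Proof. intros Ht. apply is_derive_extend_left; [exact Ht | apply Hd, Ht | now intros ->]. Qed.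

Let is_derive_dfe t : 0 <= t -> is_derive dfe t (F (f t)).
Proof. intros Ht. apply is_derive_extend_left; [exact Ht | apply Hd, Ht | now intros ->]. Qed.

Let continuity_fe : continuity fe.
Proof. apply continuity_extend_left. intros t Ht; apply Hd, Ht. Qed.

Let continuity_dfe : continuity dfe.
Proof. apply (continuity_extend_left df (fun s => F (f s))). intros t Ht; apply Hd, Ht. Qed.

Lemma energy_conservation t : 0 <= t -> df t ^ 2 = 2 * kinetic F v x (f t).
Proof.
  intros Ht. set (E := fun s => dfe s ^ 2 / 2 + Upot F (fe s)).
  assert (HE : E t = E 0).
  { apply is_derive_zero_eq; [exact Ht |]. intros s Hs. unfold E.
    evar (l : R); replace 0 with l.
    - apply (is_derive_plus (fun s => dfe s ^ 2 / 2) (fun s => Upot F (fe s))).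
      + apply (is_derive_ext (fun s => / 2 * dfe s ^ 2)); [intros; lra |].
        apply is_derive_scal, is_derive_pow, is_derive_dfe, Hs.
      + apply (is_derive_comp (Upot F) fe); [apply is_derive_Upot, HF | apply is_derive_fe, Hs].
    - unfold l, fe, dfe. rewrite !extend_left_nonneg by apply Hs.
      simpl; unfold plus, scal; simpl; unfold mult; simpl. field. }
  unfold E, fe, dfe in HE. rewrite !extend_left_nonneg in HE by lra.
  rewrite Hf0, Hdf0 in HE. unfold kinetic, H0. lra.
Qed.

(* If [f t < x], the maximum of [f] on [0, t] is interior (the particle starts moving right),
   hence a turning point, where energy conservation forces [kinetic = 0], excluded by (ii). *)
Lemma solution_ge_start t : 0 <= t -> x <= f t.
Proof.
  intros Ht. destruct (Rle_lt_dec x (f t)) as [| Hlt]; [assumption | exfalso].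
  assert (Htp : 0 < t) by (destruct (Rle_lt_or_eq_dec 0 t Ht) as [| <-]; [assumption | lra]).
  destruct (is_derive_pos_locally fe 0 (df 0) (is_derive_fe 0 (Rle_refl 0))) as [d [Hd0 Hinc]];
    [lra |].
  set (h := Rmin d t / 2).
  assert (0 < Rmin d t) by (apply Rmin_pos; lra).
  pose proof (Rmin_l d t). pose proof (Rmin_r d t).
  destruct (Hinc h ltac:(unfold h; lra)) as [_ Hh]. rewrite Rplus_0_l in Hh.
  destruct (continuity_ab_maj fe 0 t Ht (fun c _ => continuity_fe c)) as [M [HM HMt]].
  assert (fe 0 = x) by (rewrite fe_nonneg; lra).
  assert (fe t = f t) by (apply fe_nonneg; lra).
  assert (fe h <= fe M) by (apply HM; unfold h; lra).
  assert (HMint : 0 < M < t).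
  { split.
    - destruct (Rle_lt_or_eq_dec 0 M (proj1 HMt)) as [| <-]; [assumption | lra].
    - destruct (Rle_lt_or_eq_dec M t (proj2 HMt)) as [| ->]; [assumption | lra]. }
  assert (Hturn : df M = 0).
  { apply (is_derive_interior_max fe M (df M) 0 t); [apply is_derive_fe; lra | exact HMint |].
    intros s Hs; apply HM; lra. }
  pose proof (energy_conservation M ltac:(lra)) as HEn. rewrite Hturn in HEn.
  pose proof (Hkin (f M) ltac:(rewrite <- fe_nonneg by lra; lra)). lra.
Qed.

Lemma solution_speed_pos t : 0 <= t -> 0 < df t.
Proof.
  intros Ht.
  assert (Hnz : forall s, 0 <= s -> df s <> 0).
  { intros s Hs Hz. pose proof (energy_conservation s Hs) as HEn. rewrite Hz in HEn.
    pose proof (Hkin (f s) (solution_ge_start s Hs)). lra. }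
  destruct (Rlt_le_dec 0 (df t)) as [| Hle]; [assumption | exfalso].
  destruct (IVT_gen dfe 0 t 0 continuity_dfe) as [s [Hs Hs0]].
  - unfold dfe; rewrite !extend_left_nonneg, Rmin_right, Rmax_left by lra. lra.
  - rewrite Rmin_left, Rmax_right in Hs by lra.
    unfold dfe in Hs0; rewrite extend_left_nonneg in Hs0 by lra. apply (Hnz s); [lra | exact Hs0].
Qed.

Lemma solution_speed t : 0 <= t -> df t = sqrt (2 * kinetic F v x (f t)).
Proof.
  intros Ht. rewrite <- energy_conservation by exact Ht.
  rewrite sqrt_pow2; [reflexivity |]. apply Rlt_le, solution_speed_pos, Ht.
Qed.

Lemma solution_increasing t1 t2 : 0 <= t1 < t2 -> f t1 < f t2.
Proof.
  intros Ht. rewrite <- !fe_nonneg by lra.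
  apply (is_derive_pos_lt fe df); [lra | |]; intros s Hs.
  - apply is_derive_fe; lra.
  - apply solution_speed_pos; lra.
Qed.

Lemma is_derive_RInt_inv_speed s : x <= s ->
  is_derive (fun b => RInt (inv_speed F v x) x b) s (inv_speed F v x s).
Proof.
  intros Hs. destruct (kinetic_pos_left F v HF x Hkin) as [d [Hd0 Hpos]].
  apply (is_derive_RInt (V := R_NormedModule) (inv_speed F v x) _ x s).
  - exists (mkposreal d Hd0). intros b Hb. apply Rabs_def2 in Hb. simpl in Hb.
    unfold minus, plus, opp in Hb; simpl in Hb.
    apply (RInt_correct (V := R_CompleteNormedModule)).
    apply (ex_RInt_continuous (V := R_CompleteNormedModule)).
    intros z Hz. apply continuous_inv_speed; [exact HF | apply Hpos].
    assert (x - d <= Rmin x b) by (apply Rmin_glb; lra). lra.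
  - apply continuous_inv_speed; [exact HF | apply Hkin, Hs].
Qed.

Lemma hitting_time_RInt t : 0 <= t -> RInt (inv_speed F v x) x (f t) = t.
Proof.
  intros Ht. set (Psi := fun s => RInt (inv_speed F v x) x (fe s) - s).
  assert (HPsi : Psi t = Psi 0).
  { apply is_derive_zero_eq; [exact Ht |]. intros s Hs. unfold Psi.
    evar (l : R); replace 0 with l.
    - apply (is_derive_minus (fun s => RInt (inv_speed F v x) x (fe s)) (fun s => s)).
      + apply (is_derive_comp (fun b => RInt (inv_speed F v x) x b) fe).
        * apply is_derive_RInt_inv_speed. rewrite fe_nonneg by lra. apply solution_ge_start; lra.
        * apply is_derive_fe; lra.
      + apply is_derive_id.
    - unfold l. rewrite fe_nonneg, solution_speed by lra.
      unfold minus, plus, opp, scal, one; simpl; unfold mult; simpl.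
      rewrite Rmult_comm, inv_speed_sqrt; [ring |].
      apply Hkin, solution_ge_start; lra. }
  unfold Psi in HPsi. rewrite !fe_nonneg, Hf0, RInt_point in HPsi by lra.
  unfold zero in HPsi; simpl in HPsi. lra.
Qed.

(* The position cannot stay below [Y] for longer than the time [RInt (inv_speed F v x) x Y]
   that the hitting-time formula would then assign to it. *)
Lemma solution_hits Y : x <= Y -> exists tau, 0 <= tau /\ f tau = Y.
Proof.
  intros HY.
  assert (Hint : forall a b, x <= a <= b -> ex_RInt (inv_speed F v x) a b).
  { intros a b Hab. apply (ex_RInt_continuous (V := R_CompleteNormedModule)). intros z Hz.
    apply continuous_inv_speed; [exact HF | apply Hkin].
    rewrite Rmin_left in Hz by lra. lra. }
  assert (Hge0 : forall a b, x <= a <= b -> 0 <= RInt (inv_speed F v x) a b).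
  { intros a b Hab. apply RInt_ge_0; [lra | apply Hint, Hab |].
    intros; apply Rlt_le, inv_speed_pos. }
  set (t := RInt (inv_speed F v x) x Y + 1).
  assert (Ht : 0 <= t) by (pose proof (Hge0 x Y ltac:(lra)); unfold t; lra).
  assert (Hft : Y <= f t).
  { destruct (Rle_lt_dec Y (f t)) as [| Hlt]; [assumption | exfalso].
    pose proof (solution_ge_start t Ht).
    pose proof (RInt_Chasles (inv_speed F v x) x (f t) Y
                  (Hint x (f t) ltac:(lra)) (Hint (f t) Y ltac:(lra))) as HC.
    rewrite hitting_time_RInt in HC by exact Ht.
    pose proof (Hge0 (f t) Y ltac:(lra)). unfold plus in HC; simpl in HC. unfold t in *. lra. }
  destruct (IVT_gen fe 0 t Y continuity_fe) as [tau [Htau Hfe]].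
  - rewrite !fe_nonneg, Hf0, Rmin_left, Rmax_right by lra. lra.
  - rewrite Rmin_left in Htau by lra. exists tau. split; [lra |].
    rewrite <- fe_nonneg by lra. exact Hfe.
Qed.

Lemma first_time_solution Y : x <= Y ->
  first_time f Y = RInt (inv_speed F v x) x Y /\ 0 <= first_time f Y /\ f (first_time f Y) = Y.
Proof.
  intros HY. destruct (solution_hits Y HY) as [tau [Htau <-]].
  rewrite first_time_increasing by (exact solution_increasing || exact Htau).
  rewrite hitting_time_RInt by exact Htau. auto.
Qed.

End Particle.

(** * Dependence of the hitting time on the starting point *)

Section HittingTimeDerivative.
Variables F v : R -> R.
Hypothesis HF : forall z, continuity_pt F z.
Hypothesis Hv : forall u, ex_derive v u.
Hypothesis Hdv : forall u, continuity_pt (Derive v) u.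

Lemma kinetic_pos_locally_2d u t : 0 < kinetic F v u t ->
  locally_2d (fun a b => 0 < kinetic F v a b) u t.
Proof.
  intros Hk. destruct (continuity_2d_pt_kinetic F v HF Hv u t (mkposreal _ Hk)) as [d Hd].
  exists d. intros a b Ha Hb. specialize (Hd a b Ha Hb). simpl in Hd.
  apply Rabs_def2 in Hd. lra.
Qed.

Lemma continuity_2d_pt_Derive_inv_speed u t : 0 < kinetic F v u t ->
  continuity_2d_pt (fun a b => Derive (fun z => inv_speed F v z b) a) u t.
Proof.
  intros Hk.
  apply (continuity_2d_pt_ext_loc
           (fun a b => - dH0 F v a / (2 * sqrt 2) * / Rpower (kinetic F v a b) (3 / 2))).
  - destruct (kinetic_pos_locally_2d u t Hk) as [d Hd]. exists d. intros a b Ha Hb.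
    symmetry. apply is_derive_unique, is_derive_inv_speed_l;
      [exact HF | exact Hv | apply Hd; assumption].
  - apply (continuity_2d_pt_mult (fun a _ => - dH0 F v a / (2 * sqrt 2))).
    + apply (continuity_1d_2d_pt_comp (fun a => - dH0 F v a / (2 * sqrt 2)) (fun a _ => a));
        [| apply continuity_2d_pt_id1].
      apply continuity_pt_div; [| apply continuity_pt_const; intros ? ?; reflexivity |].
      * apply continuity_pt_opp, continuity_pt_minus; [apply continuity_pt_mult | apply HF].
        -- destruct (Hv u) as [l Hl]. exact (is_derive_continuity_pt v u l Hl).
        -- apply Hdv.
      * assert (0 < sqrt 2) by (apply sqrt_lt_R0; lra). lra.
    + apply continuity_2d_pt_inv; [| apply Rgt_not_eq, Rpower_pos].
      apply (continuity_1d_2d_pt_comp (fun w => Rpower w (3 / 2)) (kinetic F v)).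
      * apply continuity_pt_Rpower, Hk.
      * apply continuity_2d_pt_kinetic; assumption.
Qed.

Section StartingPoint.
Variables x Y : R.
Hypothesis Hvx : 0 < v x.
Hypothesis Hkin : forall z, x <= z -> 0 < kinetic F v x z.
Hypothesis HxY : x <= Y.

Lemma kinetic_pos_near : exists e, 0 < e /\
  forall u t, Rabs (u - x) < e -> x - e <= t <= Y + e -> 0 < kinetic F v u t.
Proof.
  destruct (kinetic_pos_left F v HF x Hkin) as [d [Hd Hleft]].
  destruct (continuity_pt_pos_lower_bound (kinetic F v x) (x - d) (Y + 1)) as [m [Hm Hlow]];
    [lra | intros z _; eapply is_derive_continuity_pt, is_derive_kinetic_r, HF |
     intros z Hz; apply Hleft; lra |].
  destruct (proj1 (continuity_pt_locally _ _) (continuity_pt_H0 F v HF Hv x) (mkposreal _ Hm))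
    as [e0 He0]; simpl in He0.
  set (e := Rmin (Rmin d 1) e0).
  assert (He : 0 < e) by (apply Rmin_pos; [apply Rmin_pos |]; [lra | lra | apply cond_pos]).
  assert (e <= d) by (unfold e; pose proof (Rmin_l (Rmin d 1) e0); pose proof (Rmin_l d 1); lra).
  assert (e <= 1) by (unfold e; pose proof (Rmin_l (Rmin d 1) e0); pose proof (Rmin_r d 1); lra).
  assert (e <= e0) by apply Rmin_r.
  exists e. split; [exact He |]. intros u t Hu Ht.
  specialize (He0 u ltac:(change (Rabs (u - x) < e0); lra)). apply Rabs_def2 in He0.
  specialize (Hlow t ltac:(lra)). unfold kinetic in *. lra.
Qed.

Lemma is_derive_hitting_time_Leibniz :
  is_derive (fun u => RInt (inv_speed F v u) u Y) x
    (RInt (fun t => Derive (fun u => inv_speed F v u t) x) x Y + - inv_speed F v x x * 1).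
Proof.
  destruct kinetic_pos_near as [e [He Hpos]].
  assert (He2 : 0 < e / 2) by lra.
  assert (Hx : Rabs (x - x) < e) by (rewrite Rminus_diag_eq, Rabs_R0; lra).
  apply (is_derive_RInt_param_bound_comp_aux2 (inv_speed F v) (fun u => u) Y x 1).
  - exists (mkposreal e He). intros u Hu.
    apply (ex_RInt_continuous (V := R_CompleteNormedModule)). intros z Hz.
    rewrite Rmin_left, Rmax_right in Hz by lra.
    apply continuous_inv_speed; [exact HF | apply Hpos; [exact Hu | lra]].
  - exists (mkposreal _ He2), (mkposreal e He). intros u Hu.
    apply (ex_RInt_continuous (V := R_CompleteNormedModule)). intros z Hz. simpl in Hz.
    rewrite Rmin_left, Rmax_right in Hz by lra.
    apply continuous_inv_speed; [exact HF | apply Hpos; [exact Hu | lra]].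
  - apply (is_derive_id (K := R_AbsRing)).
  - exists (mkposreal _ He2), (mkposreal e He). intros u Hu t Ht. simpl in Ht.
    eexists. apply is_derive_inv_speed_l; [exact HF | exact Hv |]. apply Hpos; [exact Hu |].
    assert (Rmin (x - e / 2) Y >= x - e / 2 \/ Rmin (x - e / 2) Y = Y)
      by (destruct (Rle_lt_dec (x - e / 2) Y);
          [left; rewrite Rmin_left | right; rewrite Rmin_right]; lra).
    assert (Rmax (x + e / 2) Y <= Y + e / 2 \/ Rmax (x + e / 2) Y = x + e / 2)
      by (destruct (Rle_lt_dec (x + e / 2) Y);
          [left; rewrite Rmax_right | right; rewrite Rmax_left]; lra).
    lra.
  - intros t Ht. rewrite Rmin_left, Rmax_right in Ht by lra.
    apply continuity_2d_pt_Derive_inv_speed, Hpos; [exact Hx | lra].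
  - exists (mkposreal e He). intros a b Ha Hb. simpl in Ha, Hb.
    apply continuity_2d_pt_Derive_inv_speed, Hpos; [exact Ha |].
    apply Rabs_def2 in Hb. lra.
  - apply continuity_pt_filterlim, continuous_inv_speed; [exact HF |]. apply Hpos; [exact Hx | lra].
Qed.

Lemma inv_speed_start : inv_speed F v x x = / v x.
Proof.
  assert (Hk := Hkin x (Rle_refl x)).
  assert (Hsq : sqrt (2 * kinetic F v x x) = v x).
  { replace (2 * kinetic F v x x) with (v x ^ 2) by (unfold kinetic, H0; field).
    apply sqrt_pow2; lra. }
  pose proof (inv_speed_sqrt F v x x Hk) as H. rewrite Hsq in H.
  apply (Rmult_eq_reg_r (v x)); [rewrite H; field |]; lra.
Qed.

Lemma is_derive_hitting_time :
  is_derive (fun u => RInt (inv_speed F v u) u Y) x (- crit_expr F v x Y).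
Proof.
  set (h := fun z => / Rpower (H0 F v x - Upot F z) (3 / 2)).
  set (c := - dH0 F v x / (2 * sqrt 2)).
  assert (Hint : RInt (fun t => Derive (fun u => inv_speed F v u t) x) x Y = c * RInt h x Y).
  { transitivity (RInt (fun t => c * h t) x Y).
    - apply RInt_ext. intros t Ht. rewrite Rmin_left, Rmax_right in Ht by lra.
      apply is_derive_unique, is_derive_inv_speed_l; [exact HF | exact Hv | apply Hkin; lra].
    - apply (RInt_scal (V := R_CompleteNormedModule) h x Y c).
      apply (ex_RInt_continuous (V := R_CompleteNormedModule)). intros z Hz.
      rewrite Rmin_left, Rmax_right in Hz by lra.
      apply (continuous_inv_Rpower_kinetic F v HF), Hkin; lra. }
  pose proof is_derive_hitting_time_Leibniz as HD.
  rewrite Hint, inv_speed_start in HD.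
  replace (- crit_expr F v x Y) with (c * RInt h x Y + - / v x * 1); [exact HD |].
  unfold crit_expr, c, h, dH0, Rdiv. ring.
Qed.

End StartingPoint.
End HittingTimeDerivative.

Definition no_collision (y : R -> R -> R) : Prop :=
  forall t x x', 0 <= t -> 0 <= x <= 1 -> 0 <= x' <= 1 -> x <> x' -> y t x <> y t x'.

Definition first_time_decreasing (y : R -> R -> R) : Prop :=
  forall Y x1 x2, 0 < Y -> 0 <= x1 -> x1 < x2 -> x2 <= Rmin Y 1 ->
    first_time (fun t => y t x2) Y < first_time (fun t => y t x1) Y.

Definition crit_expr_nonneg (F v : R -> R) : Prop :=
  forall Y, 0 < Y -> forall x, 0 <= x <= Rmin Y 1 -> 0 <= crit_expr F v x Y.

Definition crit_condition (F v : R -> R) : Prop :=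
  forall Y, 0 < Y ->
    (forall x, 0 <= x <= Rmin Y 1 -> 0 <= crit_expr F v x Y) /\
    discrete_set (fun x => 0 <= x <= Rmin Y 1 /\ crit_expr F v x Y = 0).

Section Flow.
Variables (F v : R -> R) (y : R -> R -> R).
Hypothesis HF : smooth F.
Hypothesis Hv : smooth v.
Hypothesis Hsol : forall x, 0 <= x <= 1 -> is_solution F x (v x) (fun t => y t x).
Hypothesis Hvpos : forall x, 0 <= x <= 1 -> 0 < v x.
Hypothesis Hkin : forall x z, 0 <= x <= 1 -> x <= z -> 0 < kinetic F v x z.

Let HFc : forall z, continuity_pt F z := smooth_continuity_pt F HF.

Lemma flow_start x : 0 <= x <= 1 -> y 0 x = x.
Proof. intros Hx. destruct (Hsol x Hx) as [df [Hy0 _]]. exact Hy0. Qed.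

Lemma flow_increasing x t1 t2 : 0 <= x <= 1 -> 0 <= t1 < t2 -> y t1 x < y t2 x.
Proof.
  intros Hx. destruct (Hsol x Hx) as [df [Hy0 [Hdf0 Hd]]].
  exact (solution_increasing F v x _ df HFc (Hvpos x Hx) (fun z => Hkin x z Hx) Hy0 Hdf0 Hd t1 t2).
Qed.

Lemma flow_continuous_extension x : 0 <= x <= 1 ->
  exists g, continuity g /\ forall t, 0 <= t -> g t = y t x.
Proof.
  intros Hx. destruct (Hsol x Hx) as [df [_ [_ Hd]]].
  apply (continuity_extension_nonneg _ df). intros t Ht; apply Hd, Ht.
Qed.

Lemma first_time_flow_RInt x Y : 0 <= x <= 1 -> x <= Y ->
  first_time (fun t => y t x) Y = RInt (inv_speed F v x) x Y.
Proof.
  intros Hx. destruct (Hsol x Hx) as [df [Hy0 [Hdf0 Hd]]].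
  exact (fun HY => proj1 (first_time_solution F v x _ df HFc (Hvpos x Hx) (fun z => Hkin x z Hx)
                            Hy0 Hdf0 Hd Y HY)).
Qed.

Lemma flow_at_first_time x Y : 0 <= x <= 1 -> x <= Y ->
  0 <= first_time (fun t => y t x) Y /\ y (first_time (fun t => y t x) Y) x = Y.
Proof.
  intros Hx. destruct (Hsol x Hx) as [df [Hy0 [Hdf0 Hd]]].
  exact (fun HY => proj2 (first_time_solution F v x _ df HFc (Hvpos x Hx) (fun z => Hkin x z Hx)
                            Hy0 Hdf0 Hd Y HY)).
Qed.

Lemma first_time_flow_at x t : 0 <= x <= 1 -> 0 <= t -> first_time (fun s => y s x) (y t x) = t.
Proof.
  intros Hx. apply (first_time_increasing (fun s => y s x)).
  intros t1 t2; apply flow_increasing, Hx.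
Qed.

Lemma first_time_decreasing_of_no_collision : no_collision y -> first_time_decreasing y.
Proof.
  intros Hnc Y x1 x2 HY Hx1 H12 Hx2.
  pose proof (Rmin_l Y 1) as HminY. pose proof (Rmin_r Y 1) as Hmin1.
  destruct (flow_at_first_time x1 Y ltac:(lra) ltac:(lra)) as [Ht1 Hy1].
  destruct (flow_at_first_time x2 Y ltac:(lra) ltac:(lra)) as [Ht2 Hy2].
  set (t1 := first_time (fun t => y t x1) Y) in *.
  set (t2 := first_time (fun t => y t x2) Y) in *.
  destruct (Rlt_le_dec t2 t1) as [| Hle]; [assumption | exfalso].
  assert (Hbehind : y t1 x2 <= Y).
  { rewrite <- Hy2. destruct (Rle_lt_or_eq_dec t1 t2 Hle) as [Hlt | ->]; [| lra].
    apply Rlt_le, flow_increasing; lra. }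
  destruct (flow_continuous_extension x1 ltac:(lra)) as [g1 [Hg1 Hge1]].
  destruct (flow_continuous_extension x2 ltac:(lra)) as [g2 [Hg2 Hge2]].
  destruct (IVT_gen (fun t => g2 t - g1 t) 0 t1 0) as [s [Hs Hs0]].
  - intros t. apply continuity_pt_minus; [apply Hg2 | apply Hg1].
  - rewrite !Hge1, !Hge2, !flow_start by lra.
    pose proof (Rmin_r (x2 - x1) (y t1 x2 - y t1 x1)).
    pose proof (Rmax_l (x2 - x1) (y t1 x2 - y t1 x1)). lra.
  - rewrite Rmin_left, Rmax_right in Hs by lra. rewrite Hge1, Hge2 in Hs0 by lra.
    apply (Hnc s x1 x2); lra.
Qed.

Lemma no_collision_of_first_time_decreasing : first_time_decreasing y -> no_collision y.
Proof.
  intros Hdec.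
  assert (Hord : forall t a b, 0 <= t -> 0 <= a -> a < b -> b <= 1 -> y t a <> y t b).
  { intros t a b Ht Ha Hab Hb Heq.
    assert (b <= y t b).
    { rewrite <- (flow_start b) at 1 by lra.
      destruct (Rle_lt_or_eq_dec 0 t Ht) as [Htp | <-]; [| lra].
      apply Rlt_le, flow_increasing; lra. }
    assert (b <= Rmin (y t b) 1) by (apply Rmin_glb; lra).
    specialize (Hdec (y t b) a b ltac:(lra) Ha Hab ltac:(assumption)).
    rewrite first_time_flow_at in Hdec by lra. rewrite <- Heq, first_time_flow_at in Hdec by lra.
    lra. }
  intros t x x' Ht Hx Hx' Hne.
  destruct (Rdichotomy _ _ Hne) as [Hlt | Hgt].
  - apply Hord; lra.
  - apply not_eq_sym, Hord; lra.
Qed.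

(* Enlarging [Y] adds a positive amount to the integral in [crit_expr], so a negative
   coefficient in front of it would make [crit_expr] negative for large [Y]. *)
Lemma crit_expr_pos_of_nonneg : crit_expr_nonneg F v ->
  forall Y, 0 < Y -> forall x, 0 <= x <= Rmin Y 1 -> 0 < crit_expr F v x Y.
Proof.
  intros Hnn Y HY x Hx.
  pose proof (Rmin_l Y 1) as HminY. pose proof (Rmin_r Y 1) as Hmin1.
  assert (Hx1 : 0 <= x <= 1) by lra.
  assert (Hnn1 := Hnn (Y + 1) ltac:(lra) x ltac:(split; [lra | apply Rmin_glb; lra])).
  set (h := fun z => / Rpower (H0 F v x - Upot F z) (3 / 2)).
  assert (Hh : forall z, x <= z -> continuous h z).
  { intros z Hz. apply (continuous_inv_Rpower_kinetic F v HFc), Hkin; assumption. }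
  assert (Hint : forall a b, x <= a <= b -> ex_RInt h a b).
  { intros a b Hab. apply (ex_RInt_continuous (V := R_CompleteNormedModule)). intros z Hz.
    rewrite Rmin_left in Hz by lra. apply Hh; lra. }
  pose proof (RInt_Chasles h x Y (Y + 1) (Hint x Y ltac:(lra)) (Hint Y (Y + 1) ltac:(lra))) as HC.
  assert (HJ : 0 < RInt h Y (Y + 1)).
  { apply RInt_gt_0; [lra | intros; apply Rinv_0_lt_compat, Rpower_pos | intros; apply Hh; lra]. }
  assert (HI : 0 <= RInt h x Y).
  { apply RInt_ge_0; [lra | apply Hint; lra | intros; apply Rlt_le, Rinv_0_lt_compat, Rpower_pos]. }
  unfold crit_expr in *. fold h in Hnn1 |- *. rewrite <- HC in Hnn1.
  unfold plus in Hnn1; simpl in Hnn1.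
  set (c := (v x * Derive v x - F x) / (2 * sqrt 2)) in *.
  assert (0 < / v x) by (apply Rinv_0_lt_compat, Hvpos, Hx1).
  destruct (Rle_lt_dec 0 c); nra.
Qed.

Let Hvd : forall u, ex_derive v u := smooth_ex_derive v Hv.
Let Hdvc : forall u, continuity_pt (Derive v) u := smooth_continuity_pt_Derive v Hv.

Lemma is_derive_hitting_time_flow x Y : 0 <= x <= 1 -> x <= Y ->
  is_derive (fun u => RInt (inv_speed F v u) u Y) x (- crit_expr F v x Y).
Proof.
  intros Hx HxY.
  exact (is_derive_hitting_time F v HFc Hvd Hdvc x Y (Hvpos x Hx) (fun z => Hkin x z Hx) HxY).
Qed.

Lemma crit_expr_nonneg_of_first_time_decreasing : first_time_decreasing y -> crit_expr_nonneg F v.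
Proof.
  intros Hdec Y HY x Hx. pose proof (Rmin_l Y 1) as HminY. pose proof (Rmin_r Y 1) as Hmin1.
  assert (0 < Rmin Y 1) by (apply Rmin_pos; lra).
  destruct (Rle_lt_dec 0 (crit_expr F v x Y)) as [| Hneg]; [assumption | exfalso].
  destruct (is_derive_pos_locally _ _ _ (is_derive_hitting_time_flow x Y ltac:(lra) ltac:(lra))
              ltac:(lra)) as [d [Hd Hinc]].
  destruct (Rlt_le_dec x (Rmin Y 1)) as [Hlt | Hge].
  - set (h := Rmin d (Rmin Y 1 - x) / 2).
    assert (0 < Rmin d (Rmin Y 1 - x)) by (apply Rmin_pos; lra).
    pose proof (Rmin_l d (Rmin Y 1 - x)). pose proof (Rmin_r d (Rmin Y 1 - x)).
    destruct (Hinc h ltac:(unfold h; lra)) as [_ Hh].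
    specialize (Hdec Y x (x + h) HY ltac:(lra) ltac:(unfold h; lra) ltac:(unfold h; lra)).
    rewrite !first_time_flow_RInt in Hdec by (unfold h; lra). lra.
  - set (h := Rmin d x / 2).
    assert (0 < Rmin d x) by (apply Rmin_pos; lra).
    pose proof (Rmin_l d x). pose proof (Rmin_r d x).
    destruct (Hinc h ltac:(unfold h; lra)) as [Hh _].
    specialize (Hdec Y (x - h) x HY ltac:(unfold h; lra) ltac:(unfold h; lra) ltac:(lra)).
    rewrite !first_time_flow_RInt in Hdec by (unfold h; lra). lra.
Qed.

Lemma crit_condition_of_first_time_decreasing : first_time_decreasing y -> crit_condition F v.
Proof.
  intros Hdec. pose proof (crit_expr_nonneg_of_first_time_decreasing Hdec) as Hnn.
  intros Y HY. split; [apply Hnn, HY |].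
  intros x [Hx Hzero]. exfalso.
  pose proof (crit_expr_pos_of_nonneg Hnn Y HY x Hx). lra.
Qed.

Lemma first_time_decreasing_of_crit_condition : crit_condition F v -> first_time_decreasing y.
Proof.
  intros Hcrit Y x1 x2 HY Hx1 H12 Hx2.
  pose proof (Rmin_l Y 1) as HminY. pose proof (Rmin_r Y 1) as Hmin1.
  pose proof (crit_expr_pos_of_nonneg (fun Y HY => proj1 (Hcrit Y HY)) Y HY) as Hpos.
  rewrite !first_time_flow_RInt by lra.
  apply Ropp_lt_cancel.
  apply (is_derive_pos_lt (fun u => - RInt (inv_speed F v u) u Y) (fun u => crit_expr F v u Y));
    [lra | |].
  - intros s Hs. rewrite <- (Ropp_involutive (crit_expr F v s Y)).
    apply (is_derive_opp (fun u => RInt (inv_speed F v u) u Y)), is_derive_hitting_time_flow; lra.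
  - intros s Hs. apply Hpos; lra.
Qed.

End Flow.

Theorem theorem1 (F v : R -> R) (y : R -> R -> R) :
  smooth F -> smooth v ->
  (* existence: y(., x) solves the Cauchy problem on [0, +oo) *)
  (forall x, 0 <= x <= 1 -> is_solution F x (v x) (fun t => y t x)) ->
  (* uniqueness *)
  (forall x, 0 <= x <= 1 -> forall g : R -> R, is_solution F x (v x) g ->
     forall t, 0 <= t -> g t = y t x) ->
  (* (i) *)
  (forall x, 0 <= x <= 1 -> 0 < v x) ->
  (* (ii) *)
  (forall x z, 0 <= x <= 1 -> x <= z -> 0 < H0 F v x - Upot F z) ->
  let C1 := forall t x x', 0 <= t -> 0 <= x <= 1 -> 0 <= x' <= 1 -> x <> x' ->
              y t x <> y t x' in
  let C2 := forall Y x1 x2, 0 < Y -> 0 <= x1 -> x1 < x2 -> x2 <= Rmin Y 1 ->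
              first_time (fun t => y t x2) Y < first_time (fun t => y t x1) Y in
  let C3 := forall Y, 0 < Y ->
              (forall x, 0 <= x <= Rmin Y 1 -> 0 <= crit_expr F v x Y) /\
              discrete_set (fun x => 0 <= x <= Rmin Y 1 /\ crit_expr F v x Y = 0) in
  (C1 <-> C2) /\ (C2 <-> C3).
Proof.
  intros HF Hv Hsol _ Hvpos Hkin C1 C2 C3.
  split; split.
  - apply (first_time_decreasing_of_no_collision F v y); assumption.
  - apply (no_collision_of_first_time_decreasing F v y); assumption.
  - apply (crit_condition_of_first_time_decreasing F v y); assumption.
  - apply (first_time_decreasing_of_crit_condition F v y); assumption.
Qed.
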